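(* Let $(X,d)$ be a compact geodesic metric space and let $f:X\to\mathbb{R}$ be Lipschitz. Then for every $(x,t)\in X\times(0,\infty)$ one has $|DQ_tf|(x)=\frac{D^+(x,t)}{t}$. Moreover, for every $x\in X$, \[ \frac{d}{dt}Q_tf(x)+\frac12|DQ_tf|^2(x)=0 \] for every $t\in(0,\infty)$ outside an at most countable set.
   Context: Hopf–Lax semigroup: for $t>0$, $Q_tf(x):=\min_{y\in X}F(t,x,y)$ with $F(t,x,y):=f(y)+\frac{d^2(x,y)}{2t}$, and $Q_0f:=f$. For $t>0$, $D^+(x,t):=\max d(x,y)$ and $D^-(x,t):=\min d(x,y)$, where $y$ ranges over the minimizers of $F(t,x,\cdot)$. Slope: $|Dg|(x):=\limsup_{y\to x}\frac{|g(y)-g(x)|}{d(y,x)}$. A metric space is geodesic if any two points $x,y$ are joined by a curve $\gamma:[0,1]\to X$ with $\gamma_0=x$, $\gamma_1=y$ and $d(\gamma_s,\gamma_t)=|t-s|d(x,y)$ for all $s,t$. *)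

From Stdlib Require Import Reals Lra List Classical ClassicalEpsilon.
Open Scope R_scope.

Definition is_metric {X : Type} (d : X -> X -> R) : Prop :=
  (forall x y, 0 <= d x y) /\
  (forall x y, d x y = 0 <-> x = y) /\
  (forall x y, d x y = d y x) /\
  (forall x y z, d x z <= d x y + d y z).

Definition is_open {X : Type} (d : X -> X -> R) (U : X -> Prop) : Prop :=
  forall x, U x -> exists r, 0 < r /\ forall y, d x y < r -> U y.

Definition compact_space {X : Type} (d : X -> X -> R) : Prop :=
  forall (I : Type) (U : I -> X -> Prop),
    (forall i, is_open d (U i)) ->
    (forall x, exists i, U i x) ->
    exists l : list I, forall x, exists i, In i l /\ U i x.

Definition geodesic {X : Type} (d : X -> X -> R) : Prop :=
  forall x y, exists gamma : R -> X,
    gamma 0 = x /\ gamma 1 = y /\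
    forall s t, 0 <= s <= 1 -> 0 <= t <= 1 ->
      d (gamma s) (gamma t) = Rabs (t - s) * d x y.

Definition lipschitz {X : Type} (d : X -> X -> R) (f : X -> R) : Prop :=
  exists L, forall x y, Rabs (f x - f y) <= L * d x y.

Definition HLF {X : Type} (d : X -> X -> R) (f : X -> R) (t : R) (x y : X) : R :=
  f y + (d x y) ^ 2 / (2 * t).

Definition is_min_of {X : Type} (g : X -> R) (v : R) : Prop :=
  (exists y, v = g y) /\ forall y, v <= g y.

Definition is_max_of {X : Type} (P : X -> Prop) (g : X -> R) (v : R) : Prop :=
  (exists y, P y /\ v = g y) /\ forall y, P y -> g y <= v.

(* Hopf-Lax semigroup: Q_t f(x) = min_y F(t,x,y) for t > 0, Q_0 f = f.
   (Values at t < 0 are irrelevant; we set them to f as well.) *)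
Definition Q {X : Type} (d : X -> X -> R) (f : X -> R) (t : R) (x : X) : R :=
  if Rle_dec t 0 then f x
  else epsilon (inhabits 0) (is_min_of (HLF d f t x)).

Definition minimizer {X : Type} (d : X -> X -> R) (f : X -> R) (t : R) (x y : X) : Prop :=
  forall z, HLF d f t x y <= HLF d f t x z.

Definition Dplus {X : Type} (d : X -> X -> R) (f : X -> R) (x : X) (t : R) : R :=
  epsilon (inhabits 0) (is_max_of (minimizer d f t x) (d x)).

Definition Dminus {X : Type} (d : X -> X -> R) (f : X -> R) (x : X) (t : R) : R :=
  epsilon (inhabits 0) (fun v => (exists y, minimizer d f t x y /\ v = d x y) /\
                                 forall y, minimizer d f t x y -> v <= d x y).

Definition isolated {X : Type} (d : X -> X -> R) (x : X) : Prop :=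
  exists r, 0 < r /\ forall y, ~ (0 < d y x < r).

(* |Dg|(x) = limsup_{y -> x} |g y - g x| / d(y,x) = L (finite);
   by convention the slope at an isolated point is 0. *)
Definition is_slope {X : Type} (d : X -> X -> R) (g : X -> R) (x : X) (L : R) : Prop :=
  (isolated d x /\ L = 0) \/
  (~ isolated d x /\
   (forall eps, 0 < eps -> exists delta, 0 < delta /\
      forall y, 0 < d y x < delta -> Rabs (g y - g x) / d y x < L + eps) /\
   (forall eps delta, 0 < eps -> 0 < delta -> exists y,
      0 < d y x < delta /\ L - eps < Rabs (g y - g x) / d y x)).

Definition slope {X : Type} (d : X -> X -> R) (g : X -> R) (x : X) : R :=
  epsilon (inhabits 0) (is_slope d g x).

From Stdlib Require Import Reals Lra List Classical ClassicalEpsilon Cantor ZArith.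
Open Scope R_scope.

(* Write F(t,x,y) = f y + d(x,y)^2/(2t) and D = D^+(x,t).  Compactness enters only
   through two consequences: upper semicontinuous functions attain their maximum on
   closed sets (giving minimizers of F and the maximum defining D^+), and nested
   nonempty families have a common adherent point (giving upper semicontinuity of
   D^+(., t), since limits of minimizers are minimizers).

   Slope: comparing Q_t f(x) and Q_t f(y) through F evaluated at each other's
   minimizers, together with that semicontinuity, bounds |D Q_t f|(x) by D/t; moving
   along a geodesic from x towards a minimizer at distance D shows the bound is
   attained.

   Time derivative: the same comparison in the time variable shows that the secants
   of t |-> Q_t f(x), measured against 1/(2t), lie between D^+(x,a)^2 and D^+(x,b)^2.
   Hence D^+(x,.)^2 is nondecreasing, so continuous off a countable set (enumerated by
   the rationals separating its jumps), and at each continuity point the squeezed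
   secants give the derivative -D^2/(2t^2) = -|D Q_t f|^2(x)/2. *)

Lemma list_argmax {A : Type} (h : A -> R) (l : list A) :
  l <> nil -> exists a, In a l /\ forall b, In b l -> h b <= h a.
Proof.
  induction l as [|a0 l IH]; intros Hne; [contradiction|].
  destruct l as [|a1 l].
  - exists a0. split; [left; reflexivity|]. intros b [<-|[]]. lra.
  - destruct IH as [m [Hm Hmax]]; [discriminate|].
    destruct (Rle_lt_dec (h a0) (h m)) as [Hle|Hlt].
    + exists m. split; [right; exact Hm|].
      intros b [<-|Hb]; [exact Hle|exact (Hmax b Hb)].
    + exists a0. split; [left; reflexivity|].
      intros b [<-|Hb]; [lra|]. pose proof (Hmax b Hb). lra.
Qed.

Lemma list_pos_lower_bound {A : Type} (h : A -> R) (l : list A) :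
  (forall a, In a l -> 0 < h a) -> exists m, 0 < m /\ forall a, In a l -> m <= h a.
Proof.
  induction l as [|a0 l IH]; intros Hpos.
  - exists 1. split; [lra|]. intros a [].
  - destruct IH as [m [Hm Hl]]; [intros a Ha; apply Hpos; right; exact Ha|].
    exists (Rmin m (h a0)). split.
    + apply Rmin_glb_lt; [exact Hm|apply Hpos; left; reflexivity].
    + intros a [<-|Ha]; [apply Rmin_r|].
      eapply Rle_trans; [apply Rmin_l|exact (Hl a Ha)].
Qed.

Lemma Rabs_le_between a b : Rabs a <= b -> - b <= a <= b.
Proof.
  intros H. pose proof (Rle_abs a). pose proof (Rle_abs (- a)).
  rewrite Rabs_Ropp in H1. lra.
Qed.

Lemma Rdiv_lt_of_lt_mul a b c : 0 < c -> a < b * c -> a / c < b.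
Proof.
  intros Hc H. apply Rmult_lt_reg_r with c; [exact Hc|].
  unfold Rdiv. rewrite Rmult_assoc, Rinv_l by lra. lra.
Qed.

Lemma Rlt_div_of_mul_lt a b c : 0 < c -> b * c < a -> b < a / c.
Proof.
  intros Hc H. apply Rmult_lt_reg_r with c; [exact Hc|].
  unfold Rdiv. rewrite Rmult_assoc, Rinv_l by lra. lra.
Qed.

Section MetricFacts.
Context {X : Type} {d : X -> X -> R} (metric : is_metric d).

Lemma dist_nonneg x y : 0 <= d x y.
Proof. destruct metric as [H _]. apply H. Qed.

Lemma dist_self x : d x x = 0.
Proof. destruct metric as [_ [H _]]. apply H. reflexivity. Qed.

Lemma dist_sym x y : d x y = d y x.
Proof. destruct metric as [_ [_ [H _]]]. apply H. Qed.

Lemma dist_triangle x y z : d x z <= d x y + d y z.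
Proof. destruct metric as [_ [_ [_ H]]]. apply H. Qed.

Lemma dist_lipschitz x : lipschitz d (d x).
Proof.
  exists 1. intros y z. rewrite Rmult_1_l. apply Rabs_le.
  pose proof (dist_triangle x y z). pose proof (dist_triangle x z y).
  rewrite (dist_sym z y) in H0. lra.
Qed.

Lemma lipschitz_sublevel_open (g : X -> R) c :
  lipschitz d g -> is_open d (fun y => g y < c).
Proof.
  intros [L HL] y Hy.
  pose proof (Rabs_pos L) as HL0.
  set (r := (c - g y) / (Rabs L + 1)).
  assert (Hr : c - g y = r * (Rabs L + 1)) by (unfold r; field; lra).
  assert (Hr0 : 0 < r) by (unfold r; apply Rdiv_lt_0_compat; lra).
  exists r. split; [exact Hr0|]. intros z Hz.
  assert (Hgz : g z - g y <= Rabs L * d y z).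
  { rewrite dist_sym. eapply Rle_trans; [apply Rle_abs|].
    eapply Rle_trans; [apply HL|].
    apply Rmult_le_compat_r; [apply dist_nonneg|apply Rle_abs]. }
  nra.
Qed.

Lemma lipschitz_superlevel_open (g : X -> R) c :
  lipschitz d g -> is_open d (fun y => c < g y).
Proof.
  intros [L HL] y Hy.
  destruct (lipschitz_sublevel_open (fun z => - g z) (- c)) with (x := y)
    as [r [Hr Hball]].
  - exists L. intros a b. rewrite <- Rabs_Ropp.
    replace (- (- g a - - g b)) with (g a - g b) by ring. apply HL.
  - lra.
  - exists r. split; [exact Hr|]. intros z Hz. specialize (Hball z Hz). lra.
Qed.

End MetricFacts.

Section Compactness.
Context {X : Type} {d : X -> X -> R} (metric : is_metric d) (compact : compact_space d).

Lemma compact_attains_max (P : X -> Prop) (g : X -> R) :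
  (forall c, is_open d (fun y => g y < c)) -> is_open d (fun y => ~ P y) ->
  (exists y, P y) -> exists y, P y /\ forall z, P z -> g z <= g y.
Proof.
  intros Hg HP [y0 Py0]. apply NNPP. intros Hno.
  assert (Hbetter : forall y, P y -> exists z, P z /\ g y < g z).
  { intros y Py. apply NNPP. intros Hn. apply Hno. exists y. split; [exact Py|].
    intros z Pz. apply Rnot_lt_le. intros Hlt. apply Hn. exists z. auto. }
  (* Cover X by the complement of P and by the sets {g < g z}, z in P. *)
  set (I := option {z : X | P z}).
  set (pt := fun i : I => match i with Some z => proj1_sig z | None => y0 end).
  assert (Hpt : forall i, P (pt i)) by (intros [[z Pz]|]; [exact Pz|exact Py0]).
  destruct (compact I (fun i y => match i with
                                  | Some z => g y < g (proj1_sig z)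
                                  | None => ~ P y end)) as [l Hl].
  - intros [z|]; [apply Hg|exact HP].
  - intros y. destruct (classic (P y)) as [Py|nPy].
    + destruct (Hbetter y Py) as [z [Pz Hz]]. exists (Some (exist _ z Pz)). exact Hz.
    + exists None. exact nPy.
  - destruct (list_argmax (fun i => g (pt i)) l) as [a [_ Ha]].
    { destruct (Hl y0) as [i [Hi _]]. intros E. rewrite E in Hi. destruct Hi. }
    destruct (Hl (pt a)) as [[[z Pz]|] [Hi Hcov]]; [|exact (Hcov (Hpt a))].
    specialize (Ha (Some (exist _ z Pz)) Hi). simpl in Ha, Hcov. lra.
Qed.

Lemma compact_bounded : exists B, forall y z, d y z <= B.
Proof.
  destruct (classic (exists x0 : X, True)) as [[x0 _]|Hempty].
  - destruct (compact_attains_max (fun _ => True) (d x0)) as [y1 [_ Hy1]].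
    + intros c. apply lipschitz_sublevel_open; [exact metric|apply dist_lipschitz, metric].
    + intros y Hy. contradiction.
    + exists x0. exact I.
    + exists (2 * d x0 y1). intros y z.
      pose proof (dist_triangle metric y x0 z). rewrite (dist_sym metric y x0) in H.
      pose proof (Hy1 y I). pose proof (Hy1 z I). lra.
  - exists 0. intros y. exfalso. apply Hempty. exists y. exact I.
Qed.

(* Compactness as a cluster point: if the nonempty sets P δ grow with δ, some
   point is adherent to every P δ. *)
Lemma compact_common_adherent_point (P : R -> X -> Prop) :
  (forall a b z, 0 < a <= b -> P a z -> P b z) ->
  (forall δ, 0 < δ -> exists z, P δ z) ->
  exists zs, forall r δ, 0 < r -> 0 < δ -> exists z, P δ z /\ d zs z < r.
Proof.
  intros Hmono Hne. apply NNPP. intros Hno.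
  (* Otherwise every point lies at positive distance from some P δ. *)
  assert (Hfar : forall y, exists δ : posreal, exists r, 0 < r /\ forall z, P δ z -> r <= d y z).
  { intros y. apply NNPP. intros Hn. apply Hno. exists y. intros r δ Hr Hδ.
    apply NNPP. intros Hn2. apply Hn. exists (mkposreal δ Hδ), r. split; [exact Hr|].
    intros z Pz. apply Rnot_lt_le. intros Hlt. apply Hn2. exists z. auto. }
  destruct (compact posreal
              (fun δ y => exists r, 0 < r /\ forall z, P δ z -> r <= d y z)) as [l Hl].
  - intros δ y [r [Hr Hy]]. exists (r / 2). split; [lra|].
    intros w Hw. exists (r / 2). split; [lra|]. intros z Pz.
    pose proof (Hy z Pz). pose proof (dist_triangle metric y w z). lra.
  - exact Hfar.
  - destruct (list_pos_lower_bound pos l) as [m [Hm Hmin]]; [intros δ _; apply cond_pos|].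
    destruct (Hne m Hm) as [z Pz].
    destruct (Hl z) as [δ [Hi [r [Hr Hz]]]].
    specialize (Hz z (Hmono m δ z (conj Hm (Hmin δ Hi)) Pz)).
    rewrite (dist_self metric) in Hz. lra.
Qed.

End Compactness.

Section Geodesic.
Context {X : Type} {d : X -> X -> R} (metric : is_metric d) (geodesic_space : geodesic d).

Lemma geodesic_point x z s :
  0 <= s <= 1 -> exists y, d x y = s * d x z /\ d y z = (1 - s) * d x z.
Proof.
  intros Hs. destruct (geodesic_space x z) as [gamma [H0 [H1 Hgamma]]].
  exists (gamma s). split.
  - rewrite <- H0 at 1. rewrite Hgamma by lra. rewrite Rabs_right by lra. ring.
  - rewrite <- H1 at 1. rewrite Hgamma by lra. rewrite Rabs_right by lra. ring.
Qed.

Lemma geodesic_points_nearby x z :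
  0 < d x z -> forall δ, 0 < δ -> exists y, 0 < d y x < δ.
Proof.
  intros Hz δ Hδ.
  set (s := Rmin (1 / 2) (δ / (2 * d x z))).
  assert (Hs1 : 0 < s).
  { apply Rmin_glb_lt; [lra|]. apply Rdiv_lt_0_compat; lra. }
  assert (Hs2 : s <= 1 / 2) by apply Rmin_l.
  assert (Hs3 : s * d x z <= δ / 2).
  { replace (δ / 2) with (δ / (2 * d x z) * d x z) by (field; lra).
    apply Rmult_le_compat_r; [lra|apply Rmin_r]. }
  destruct (geodesic_point x z s) as [y [Hy _]]; [lra|].
  exists y. rewrite (dist_sym metric), Hy. split; [nra|lra].
Qed.

End Geodesic.

(** Nondecreasing functions are continuous off a countable set. *)

(* For a nondecreasing G, this is continuity of G at t. *)
Definition approached_from_both_sides (G : R -> R) (t : R) : Prop :=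
  forall e, 0 < e -> exists u s, 0 < u < t /\ t < s /\ G t - e < G u /\ G s < G t + e.

Definition separates (G : R -> R) (r t : R) : Prop :=
  (forall u, 0 < u < t -> G u < r) /\ (forall s, t < s -> r < G s).

Lemma separation_point_unique G r t1 t2 :
  0 < t1 -> 0 < t2 -> separates G r t1 -> separates G r t2 -> t1 = t2.
Proof.
  intros H1 H2 [L1 R1] [L2 R2].
  destruct (Rtotal_order t1 t2) as [H|[H|H]]; [exfalso| exact H| exfalso].
  - pose proof (R1 ((t1 + t2) / 2)). pose proof (L2 ((t1 + t2) / 2)). lra.
  - pose proof (R2 ((t1 + t2) / 2)). pose proof (L1 ((t1 + t2) / 2)). lra.
Qed.

Lemma IZR_as_nat_difference z : IZR z = INR (Z.to_nat z) - INR (Z.to_nat (- z)).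
Proof.
  destruct z as [|p|p]; simpl.
  - ring.
  - rewrite INR_IPR. unfold IZR. ring.
  - rewrite INR_IPR, IZR_NEG. unfold IZR. ring.
Qed.

(* A surjection from nat onto the rationals, written (a - b) / (m + 1). *)
Definition rat_enum (n : nat) : R :=
  let (p, m) := Cantor.of_nat n in
  let (a, b) := Cantor.of_nat p in (INR a - INR b) / INR (S m).

Lemma rat_enum_dense α β : α < β -> exists n, α < rat_enum n < β.
Proof.
  intros Hαβ.
  destruct (INR_unbounded (1 / (β - α))) as [m Hm].
  set (N := INR (S m)).
  assert (HN : 1 < (β - α) * N).
  { assert (1 / (β - α) < N) by (unfold N; rewrite S_INR; lra).
    apply Rmult_lt_compat_l with (r := β - α) in H; [|lra].
    replace ((β - α) * (1 / (β - α))) with 1 in H by (field; lra). exact H. }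
  assert (HN0 : 0 < N) by (unfold N; apply lt_0_INR, Nat.lt_0_succ).
  destruct (archimed (α * N)) as [Hup1 Hup2].
  set (k := up (α * N)) in *.
  exists (Cantor.to_nat (Cantor.to_nat (Z.to_nat k, Z.to_nat (- k)), m)).
  unfold rat_enum. rewrite !Cantor.cancel_of_to. fold N.
  rewrite <- IZR_as_nat_difference. split.
  - apply Rlt_div_of_mul_lt; [exact HN0|]. lra.
  - apply Rdiv_lt_of_lt_mul; [exact HN0|]. lra.
Qed.

(* A jump of a nondecreasing function is separated by a rational, and each rational
   separates at most one jump: so the discontinuities can be listed as N 0, N 1, ... *)
Lemma nondecreasing_continuous_off_countable (G : R -> R) :
  (forall a b, 0 < a < b -> G a <= G b) ->
  exists N : nat -> R, forall t, 0 < t -> (forall n, N n <> t) ->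
    approached_from_both_sides G t.
Proof.
  intros Hmono.
  (* N n is the (unique) point where the n-th rational separates G, if any. *)
  exists (fun n => epsilon (inhabits 0) (fun t => 0 < t /\ separates G (rat_enum n) t)).
  intros t Ht HN.
  assert (Hnosep : forall n, ~ separates G (rat_enum n) t).
  { intros n Hsep. apply (HN n).
    destruct (epsilon_spec (inhabits 0) (fun t => 0 < t /\ separates G (rat_enum n) t))
      as [Hpos Hsep']; [exists t; auto|].
    exact (separation_point_unique G _ _ _ Hpos Ht Hsep' Hsep). }
  intros e He.
  assert (Hleft : exists u, 0 < u < t /\ G t - e < G u).
  { apply NNPP. intros Hn.
    destruct (rat_enum_dense (G t - e) (G t)) as [n Hn']; [lra|].
    apply (Hnosep n). split.
    - intros u Hu. apply Rnot_le_lt. intros Hle. apply Hn. exists u. split; [exact Hu|lra].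
    - intros s Hs. pose proof (Hmono t s (conj Ht Hs)). lra. }
  assert (Hright : exists s, t < s /\ G s < G t + e).
  { apply NNPP. intros Hn.
    destruct (rat_enum_dense (G t) (G t + e)) as [n Hn']; [lra|].
    apply (Hnosep n). split.
    - intros u Hu. pose proof (Hmono u t Hu). lra.
    - intros s Hs. apply Rnot_le_lt. intros Hle. apply Hn. exists s. split; [exact Hs|lra]. }
  destruct Hleft as [u [Hu Hgu]]. destruct Hright as [s [Hs Hgs]].
  exists u, s. repeat split; lra.
Qed.

(** Differentiability of a function whose secants are squeezed. *)

(* The secant slopes of q, measured against the variable 1 / (2 s), lie between
   the values of G at the two endpoints. *)
Definition secant_bounded (q G : R -> R) : Prop :=
  forall a b, 0 < a < b ->
    G a * (/ (2 * a) - / (2 * b)) <= q a - q b <= G b * (/ (2 * a) - / (2 * b)).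

Lemma inv_double_sub_pos a b : 0 < a < b -> 0 < / (2 * a) - / (2 * b).
Proof.
  intros Hab. replace (/ (2 * a) - / (2 * b)) with ((b - a) / (2 * a * b)) by (field; lra).
  apply Rdiv_lt_0_compat; nra.
Qed.

Lemma secant_bounded_monotone q G :
  secant_bounded q G -> forall a b, 0 < a < b -> G a <= G b.
Proof.
  intros Hsec a b Hab. pose proof (inv_double_sub_pos a b Hab).
  destruct (Hsec a b Hab). apply Rmult_le_reg_r with (/ (2 * a) - / (2 * b)); lra.
Qed.

Lemma between_div a b c x : 0 < c -> a * c <= x <= b * c -> a <= x / c <= b.
Proof.
  intros Hc [Ha Hb]. split.
  - apply Rmult_le_reg_r with c; [exact Hc|]. replace (x / c * c) with x by (field; lra). exact Ha.
  - apply Rmult_le_reg_r with c; [exact Hc|]. replace (x / c * c) with x by (field; lra). exact Hb.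
Qed.

Lemma secant_bounded_increment q G t h :
  secant_bounded q G -> 0 < t -> 0 < t + h -> h <> 0 ->
  exists k, G (Rmin t (t + h)) <= k <= G (Rmax t (t + h)) /\
            (q (t + h) - q t) / h = - k / (2 * t * (t + h)).
Proof.
  intros Hsec Ht Hth Hh.
  exists ((q t - q (t + h)) * (2 * t * (t + h)) / h). split; [|field; lra].
  destruct (Rlt_or_le 0 h) as [Hpos|Hneg].
  - rewrite Rmin_left, Rmax_right by lra.
    replace ((q t - q (t + h)) * (2 * t * (t + h)) / h)
      with ((q t - q (t + h)) / (/ (2 * t) - / (2 * (t + h)))) by (field; lra).
    apply between_div; [apply inv_double_sub_pos; lra|]. apply Hsec. lra.
  - rewrite Rmin_right, Rmax_left by lra.
    replace ((q t - q (t + h)) * (2 * t * (t + h)) / h)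
      with ((q (t + h) - q t) / (/ (2 * (t + h)) - / (2 * t))) by (field; lra).
    apply between_div; [apply inv_double_sub_pos; lra|].
    apply (Hsec (t + h) t). lra.
Qed.

Lemma quotient_close t h k g eps :
  0 < t -> Rabs h <= t / 2 -> Rabs (k - g) < eps * t ^ 2 / 2 ->
  Rabs g * Rabs h < eps * t ^ 3 / 2 ->
  Rabs (- k / (2 * t * (t + h)) - - g / (2 * t ^ 2)) < eps.
Proof.
  intros Ht Hh Hk Hg.
  pose proof (Rle_abs h). pose proof (Rle_abs (- h)). rewrite Rabs_Ropp in H0.
  set (den := 2 * t ^ 2 * (t + h)).
  assert (Hden : t ^ 3 <= den) by (unfold den; nra).
  assert (Ht3 : 0 < t ^ 3) by (apply pow_lt; lra).
  replace (- k / (2 * t * (t + h)) - - g / (2 * t ^ 2))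
    with ((g * h - (k - g) * t) / den) by (unfold den; field; lra).
  assert (Hnum : Rabs (g * h - (k - g) * t) < eps * den).
  { unfold Rminus at 1. eapply Rle_lt_trans; [apply Rabs_triang|].
    rewrite Rabs_Ropp, !Rabs_mult, (Rabs_right t) by lra.
    assert (Rabs (k - g) * t < eps * t ^ 3 / 2) by nra.
    assert (0 < eps) by (pose proof (Rabs_pos (k - g)); nra).
    nra. }
  unfold Rdiv. rewrite Rabs_mult, (Rabs_right (/ den)) by (left; apply Rinv_0_lt_compat; lra).
  apply Rdiv_lt_of_lt_mul; [lra|exact Hnum].
Qed.

(* If the secants of q are squeezed by G and G is continuous at t, then q is
   differentiable at t with derivative -G(t)/(2t^2), the derivative of 1/(2t) times G(t). *)
Lemma derivative_from_secant_bounds (q G : R -> R) t :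
  0 < t -> secant_bounded q G -> approached_from_both_sides G t ->
  derivable_pt_lim q t (- G t / (2 * t ^ 2)).
Proof.
  intros Ht Hsec Hcont eps Heps.
  assert (Ht2 : 0 < t ^ 2) by (apply pow_lt; lra).
  assert (Ht3 : 0 < t ^ 3) by (apply pow_lt; lra).
  destruct (Hcont (eps * t ^ 2 / 2)) as [u [s [Hu [Hts [Hgu Hgs]]]]]; [nra|].
  set (η := eps * t ^ 3 / (2 * (Rabs (G t) + 1))).
  assert (Hη : 0 < η).
  { apply Rdiv_lt_0_compat; [nra|]. pose proof (Rabs_pos (G t)). lra. }
  set (δ := Rmin (Rmin (t / 2) (t - u)) (Rmin (s - t) η)).
  assert (Hδ : 0 < δ) by (unfold δ; repeat apply Rmin_glb_lt; lra).
  exists (mkposreal δ Hδ). simpl. intros h Hh0 Hhδ.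
  assert (Hδ1 : δ <= t / 2) by (eapply Rle_trans; [apply Rmin_l|apply Rmin_l]).
  assert (Hδ2 : δ <= t - u) by (eapply Rle_trans; [apply Rmin_l|apply Rmin_r]).
  assert (Hδ3 : δ <= s - t) by (eapply Rle_trans; [apply Rmin_r|apply Rmin_l]).
  assert (Hδ4 : δ <= η) by (eapply Rle_trans; [apply Rmin_r|apply Rmin_r]).
  pose proof (Rle_abs h). pose proof (Rle_abs (- h)). rewrite Rabs_Ropp in H0.
  destruct (secant_bounded_increment q G t h Hsec Ht ltac:(lra) Hh0) as [k [Hk ->]].
  assert (Hlo : G u <= G (Rmin t (t + h))).
  { apply (secant_bounded_monotone q G Hsec). split; [lra|]. apply Rmin_glb_lt; lra. }
  assert (Hhi : G (Rmax t (t + h)) <= G s).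
  { apply (secant_bounded_monotone q G Hsec). split; [|apply Rmax_lub_lt; lra].
    eapply Rlt_le_trans; [|apply Rmax_l]. lra. }
  apply quotient_close; [lra|lra| |].
  - apply Rabs_def1; lra.
  - assert (Rabs h * (Rabs (G t) + 1) < eps * t ^ 3 / 2).
    { replace (eps * t ^ 3 / 2) with (η * (Rabs (G t) + 1))
        by (unfold η; field; pose proof (Rabs_pos (G t)); lra).
      apply Rmult_lt_compat_r; [pose proof (Rabs_pos (G t)); lra|lra]. }
    pose proof (Rabs_pos h). nra.
Qed.

Lemma is_slope_unique {X : Type} (d : X -> X -> R) g x L1 L2 :
  is_slope d g x L1 -> is_slope d g x L2 -> L1 = L2.
Proof.
  assert (Hlt : forall A C, is_slope d g x A -> is_slope d g x C -> ~ A < C).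
  { intros A C [[Hi HA]|[Hi [Hu Hl]]] [[Hi' HC]|[Hi' [Hu' Hl']]] Hlt;
      [lra|contradiction|contradiction|].
    destruct (Hu ((C - A) / 2)) as [δ [Hδ Hup]]; [lra|].
    destruct (Hl' ((C - A) / 2) δ) as [y [Hy Hlow]]; [lra|lra|].
    pose proof (Hup y Hy). lra. }
  intros H1 H2. destruct (Rtotal_order L1 L2) as [H|[H|H]]; [exfalso| exact H| exfalso].
  - exact (Hlt _ _ H1 H2 H).
  - exact (Hlt _ _ H2 H1 H).
Qed.

Lemma slope_value {X : Type} (d : X -> X -> R) g x L : is_slope d g x L -> slope d g x = L.
Proof.
  intros H. apply (is_slope_unique d g x); [|exact H].
  unfold slope. apply epsilon_spec. exists L. exact H.
Qed.

Lemma increment_upper_bound t ρ D a c eps P :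
  0 < t -> 0 < ρ -> ρ < eps * t -> 0 <= D -> 0 <= a -> a < D + eps * t / 2 ->
  0 <= c <= ρ + a -> P <= (c ^ 2 - a ^ 2) / (2 * t) -> P < (D / t + eps) * ρ.
Proof.
  intros Ht Hρ Hρe HD Ha Hac Hc HP.
  assert (c ^ 2 - a ^ 2 <= ρ * (ρ + 2 * a)) by nra.
  assert (ρ * (ρ + 2 * a) < ρ * (2 * D + 2 * eps * t)) by nra.
  assert ((c ^ 2 - a ^ 2) / (2 * t) < ρ * (2 * D + 2 * eps * t) / (2 * t)).
  { unfold Rdiv. apply Rmult_lt_compat_r; [apply Rinv_0_lt_compat|]; lra. }
  replace ((D / t + eps) * ρ) with (ρ * (2 * D + 2 * eps * t) / (2 * t)) by (field; lra).
  lra.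
Qed.

(* Moving a fraction s of the way towards a point at distance D lowers
   (distance)^2/(2t) by D^2 s (2 - s)/(2t) > (D/t - eps) s D, for small s. *)
Lemma increment_lower_bound t D s eps P :
  0 < t -> 0 < D -> 0 < eps -> 0 < s <= 1 / 2 -> s <= t * eps / D ->
  D ^ 2 * s * (2 - s) / (2 * t) <= P -> (D / t - eps) * (s * D) < P.
Proof.
  intros Ht HD He Hs Hse HP.
  assert (HsD : s * D <= t * eps).
  { replace (t * eps) with (t * eps / D * D) by (field; lra).
    apply Rmult_le_compat_r; lra. }
  assert (0 < s * D * (2 * t * eps - s * D) / (2 * t)).
  { apply Rdiv_lt_0_compat; [|lra]. apply Rmult_lt_0_compat; nra. }
  replace ((D / t - eps) * (s * D))
    with (D ^ 2 * s * (2 - s) / (2 * t) - s * D * (2 * t * eps - s * D) / (2 * t))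
    by (field; lra).
  lra.
Qed.

(** The Hopf–Lax semigroup on a compact metric space. *)

Section HopfLax.
Context {X : Type} {d : X -> X -> R} {f : X -> R} {Lf B : R}.
Hypothesis metric : is_metric d.
Hypothesis compact : compact_space d.
Hypothesis Lf_nonneg : 0 <= Lf.
Hypothesis f_lip : forall y z, Rabs (f y - f z) <= Lf * d y z.
Hypothesis diam : forall y z, d y z <= B.

Lemma HLF_joint_estimate t a a' b b' :
  0 < t -> Rabs (HLF d f t a b - HLF d f t a' b') <= (Lf + B / t) * (d a a' + d b b').
Proof.
  intros Ht. unfold HLF.
  pose proof (f_lip b b') as Hf. apply Rabs_le_between in Hf.
  pose proof (dist_triangle metric a a' b) as T1.
  pose proof (dist_triangle metric a' b' b) as T2.
  pose proof (dist_triangle metric a' a b') as T3.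
  pose proof (dist_triangle metric a b b') as T4.
  rewrite (dist_sym metric b' b) in T2. rewrite (dist_sym metric a' a) in T3.
  pose proof (dist_nonneg metric a b). pose proof (dist_nonneg metric a' b').
  pose proof (dist_nonneg metric a a'). pose proof (dist_nonneg metric b b').
  pose proof (diam a b). pose proof (diam a' b').
  set (u := d a b) in *. set (v := d a' b') in *. set (e := d a a' + d b b').
  assert (Hq1 : (u - v) * (u + v) <= e * (2 * B)) by (unfold e; nra).
  assert (Hq2 : (v - u) * (u + v) <= e * (2 * B)) by (unfold e; nra).
  set (w := / (2 * t)).
  assert (Hw : 0 < w) by (unfold w; apply Rinv_0_lt_compat; lra).
  replace (u ^ 2 / (2 * t)) with (u ^ 2 * w) by (unfold w, Rdiv; ring).
  replace (v ^ 2 / (2 * t)) with (v ^ 2 * w) by (unfold w, Rdiv; ring).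
  replace ((Lf + B / t) * e) with (Lf * e + e * (2 * B) * w) by (unfold w; field; lra).
  apply Rabs_le. unfold e in *. split; nra.
Qed.

Lemma HLF_lipschitz t x : 0 < t -> lipschitz d (HLF d f t x).
Proof.
  intros Ht. exists (Lf + B / t). intros y z.
  pose proof (HLF_joint_estimate t x x y z Ht). rewrite (dist_self metric) in H. lra.
Qed.

Lemma minimizer_exists t x : 0 < t -> exists y, minimizer d f t x y.
Proof.
  intros Ht.
  destruct (compact_attains_max compact (fun _ => True) (fun y => - HLF d f t x y))
    as [y [_ Hy]].
  - intros c. apply (lipschitz_sublevel_open metric).
    destruct (HLF_lipschitz t x Ht) as [L HL]. exists L. intros a b.
    rewrite <- Rabs_Ropp. replace (- (- HLF d f t x a - - HLF d f t x b))
      with (HLF d f t x a - HLF d f t x b) by ring. apply HL.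
  - intros y Hy. contradiction.
  - exists x. exact I.
  - exists y. intros z. specialize (Hy z I). lra.
Qed.

Lemma Q_at_minimizer t x y : 0 < t -> minimizer d f t x y -> Q d f t x = HLF d f t x y.
Proof.
  intros Ht Hy. unfold Q. destruct (Rle_dec t 0); [lra|].
  destruct (epsilon_spec (inhabits 0) (is_min_of (HLF d f t x))) as [[y0 ->] Hle].
  - exists (HLF d f t x y). split; [exists y; reflexivity|exact Hy].
  - pose proof (Hle y). pose proof (Hy y0). lra.
Qed.

Lemma Q_le_HLF t x z : 0 < t -> Q d f t x <= HLF d f t x z.
Proof.
  intros Ht. destruct (minimizer_exists t x Ht) as [y Hy].
  rewrite (Q_at_minimizer t x y Ht Hy). apply Hy.
Qed.

Lemma minimizers_closed t x : 0 < t -> is_open d (fun y => ~ minimizer d f t x y).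
Proof.
  intros Ht y Hy.
  assert (Hw : exists w, HLF d f t x w < HLF d f t x y).
  { apply NNPP. intros Hn. apply Hy. intros w. apply Rnot_lt_le. intros Hlt.
    apply Hn. exists w. exact Hlt. }
  destruct Hw as [w Hw].
  destruct (lipschitz_superlevel_open metric (HLF d f t x) (HLF d f t x w)
              (HLF_lipschitz t x Ht) y Hw) as [r [Hr Hball]].
  exists r. split; [exact Hr|]. intros z Hz Hmin.
  specialize (Hball z Hz). specialize (Hmin w). lra.
Qed.

Lemma Dplus_spec t x :
  0 < t ->
  (exists y, minimizer d f t x y /\ Dplus d f x t = d x y) /\
  (forall y, minimizer d f t x y -> d x y <= Dplus d f x t).
Proof.
  intros Ht. unfold Dplus.
  apply (epsilon_spec (inhabits 0) (is_max_of (minimizer d f t x) (d x))).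
  destruct (compact_attains_max compact (minimizer d f t x) (d x)) as [y [Hy Hmax]].
  - intros c. apply (lipschitz_sublevel_open metric), (dist_lipschitz metric).
  - apply minimizers_closed, Ht.
  - apply minimizer_exists, Ht.
  - exists (d x y). split; [exists y; auto|exact Hmax].
Qed.

Lemma minimizer_graph_closed t x zs :
  0 < t ->
  (forall η, 0 < η -> exists y z, d x y < η /\ minimizer d f t y z /\ d zs z < η) ->
  minimizer d f t x zs.
Proof.
  intros Ht Hnear w. apply Rnot_lt_le. intros Hlt.
  set (gap := HLF d f t x zs - HLF d f t x w).
  set (K := Lf + B / t).
  assert (HK : 0 <= K).
  { pose proof (diam x x) as HB. rewrite (dist_self metric) in HB.
    assert (0 <= B / t) by (unfold Rdiv; apply Rmult_le_pos; [lra|left; apply Rinv_0_lt_compat, Ht]). unfold K. lra. }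
  set (η := gap / (3 * K + 3)).
  assert (Hgap : gap = η * (3 * K + 3)) by (unfold η; field; lra).
  assert (Hη : 0 < η) by (apply Rdiv_lt_0_compat; unfold gap; lra).
  destruct (Hnear η Hη) as [y [z [Hxy [Hmin Hz]]]].
  pose proof (HLF_joint_estimate t x y zs z Ht) as E1.
  pose proof (HLF_joint_estimate t y x w w Ht) as E2.
  rewrite (dist_self metric), (dist_sym metric y x) in E2.
  apply Rabs_le_between in E1, E2. fold K in E1, E2. specialize (Hmin w).
  pose proof (dist_nonneg metric x y). pose proof (dist_nonneg metric zs z).
  assert (K * (d x y + d zs z) <= K * (2 * η)) by (apply Rmult_le_compat_l; lra).
  assert (K * (d x y + 0) <= K * η) by (apply Rmult_le_compat_l; lra).
  unfold gap in Hgap. nra.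
Qed.

Lemma Dplus_upper_semicontinuous t x :
  0 < t -> forall eps, 0 < eps -> exists δ, 0 < δ /\
    forall y y', d y x < δ -> minimizer d f t y y' -> d y y' < Dplus d f x t + eps.
Proof.
  intros Ht eps Heps. apply NNPP. intros Hno.
  set (D := Dplus d f x t).
  set (far := fun δ z => exists y, d y x < δ /\ minimizer d f t y z /\ D + eps <= d y z).
  destruct (compact_common_adherent_point metric compact far) as [zs Hzs].
  - intros a b z Hab [y [Hy Hyz]]. exists y. split; [lra|exact Hyz].
  - intros δ Hδ. apply NNPP. intros Hn. apply Hno. exists δ. split; [exact Hδ|].
    intros y y' Hy Hy'. apply Rnot_le_lt. intros Hle. apply Hn. exists y', y. auto.
  - assert (Hmin : minimizer d f t x zs).
    { apply (minimizer_graph_closed t x zs Ht). intros η Hη.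
      destruct (Hzs η η Hη Hη) as [z [[y [Hy [Hyz _]]] Hz]].
      exists y, z. rewrite (dist_sym metric). auto. }
    assert (Hfar : D + eps <= d x zs).
    { apply Rnot_lt_le. intros Hlt. set (η := (D + eps - d x zs) / 2).
      destruct (Hzs η η) as [z [[y [Hy [_ Hyz]]] Hz]]; [unfold η; lra|unfold η; lra|].
      pose proof (dist_triangle metric y x zs). pose proof (dist_triangle metric y zs z).
      unfold η in *. lra. }
    pose proof (proj2 (Dplus_spec t x Ht) zs Hmin). fold D in H. lra.
Qed.

Lemma slope_upper_estimate t x :
  0 < t -> forall eps, 0 < eps -> exists δ, 0 < δ /\ forall y, 0 < d y x < δ ->
    Rabs (Q d f t y - Q d f t x) < (Dplus d f x t / t + eps) * d y x.
Proof.
  intros Ht eps Heps.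
  destruct (Dplus_spec t x Ht) as [[x' [Hx' HD]] _].
  set (D := Dplus d f x t) in *.
  destruct (Dplus_upper_semicontinuous t x Ht (eps * t / 2)) as [δ1 [Hδ1 Husc]]; [nra|].
  exists (Rmin δ1 (eps * t)). split; [apply Rmin_glb_lt; nra|].
  intros y [Hy0 Hy1].
  assert (Hyδ : d y x < δ1) by (eapply Rlt_le_trans; [exact Hy1|apply Rmin_l]).
  assert (Hyε : d y x < eps * t) by (eapply Rlt_le_trans; [exact Hy1|apply Rmin_r]).
  destruct (minimizer_exists t y Ht) as [y' Hy'].
  pose proof (Husc y y' Hyδ Hy') as Hyy'. fold D in Hyy'.
  (* Compare each value with F evaluated at the other point's minimizer. *)
  pose proof (Q_at_minimizer t x x' Ht Hx') as Ex.
  pose proof (Q_at_minimizer t y y' Ht Hy') as Ey.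
  pose proof (Q_le_HLF t y x' Ht) as Eyx'.
  pose proof (Q_le_HLF t x y' Ht) as Exy'.
  unfold HLF in *.
  pose proof (dist_nonneg metric x x'). pose proof (dist_nonneg metric y y').
  pose proof (dist_nonneg metric y x'). pose proof (dist_nonneg metric x y').
  apply Rabs_def1.
  - apply (increment_upper_bound t (d y x) D D (d y x') eps); try lra.
    + split; [lra|]. rewrite HD. apply (dist_triangle metric).
    + rewrite HD. unfold Rdiv in *. lra.
  - assert (- (Q d f t y - Q d f t x) < (D / t + eps) * d y x); [|lra].
    apply (increment_upper_bound t (d y x) D (d y y') (d x y') eps); try lra.
    split; [lra|]. rewrite (dist_sym metric y x). apply (dist_triangle metric).
Qed.

Hypothesis geodesic_space : geodesic d.

(* Lower half of the slope formula: moving from x towards a farthest minimizer x'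
   makes Q_t f drop at rate at least D^+/t. *)
Lemma slope_lower_estimate t x :
  0 < t -> 0 < Dplus d f x t -> forall eps δ, 0 < eps -> 0 < δ ->
    exists y, 0 < d y x < δ /\
      (Dplus d f x t / t - eps) * d y x < Rabs (Q d f t y - Q d f t x).
Proof.
  intros Ht HD eps δ Heps Hδ.
  destruct (Dplus_spec t x Ht) as [[x' [Hx' HDx']] _].
  set (D := Dplus d f x t) in *.
  set (s := Rmin (1 / 2) (Rmin (δ / (2 * D)) (t * eps / D))).
  assert (Hs0 : 0 < s).
  { apply Rmin_glb_lt; [lra|]. apply Rmin_glb_lt; apply Rdiv_lt_0_compat; nra. }
  assert (Hs1 : s <= 1 / 2) by apply Rmin_l.
  assert (Hs2 : s <= δ / (2 * D)) by (eapply Rle_trans; [apply Rmin_r|apply Rmin_l]).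
  assert (Hs3 : s <= t * eps / D) by (eapply Rle_trans; [apply Rmin_r|apply Rmin_r]).
  destruct (geodesic_point geodesic_space x x' s) as [y [Hxy Hyx']]; [lra|].
  rewrite <- HDx' in Hxy, Hyx'.
  exists y. rewrite (dist_sym metric y x), Hxy. split.
  - split; [nra|].
    assert (s * D <= δ / 2).
    { replace (δ / 2) with (δ / (2 * D) * D) by (field; lra).
      apply Rmult_le_compat_r; lra. }
    lra.
  - pose proof (Q_at_minimizer t x x' Ht Hx') as Ex.
    pose proof (Q_le_HLF t y x' Ht) as Ey.
    unfold HLF in Ex, Ey. rewrite <- HDx' in Ex. rewrite Hyx' in Ey.
    assert (Hdrop : D ^ 2 * s * (2 - s) / (2 * t) <= Q d f t x - Q d f t y).
    { replace (D ^ 2 * s * (2 - s) / (2 * t))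
        with (D ^ 2 / (2 * t) - ((1 - s) * D) ^ 2 / (2 * t)) by (field; lra).
      lra. }
    pose proof (increment_lower_bound t D s eps _ Ht HD Heps (conj Hs0 Hs1) Hs3 Hdrop).
    pose proof (Rle_abs (- (Q d f t y - Q d f t x))). rewrite Rabs_Ropp in H0.
    lra.
Qed.

Lemma slope_of_Q t x : 0 < t -> is_slope d (Q d f t) x (Dplus d f x t / t).
Proof.
  intros Ht.
  destruct (Dplus_spec t x Ht) as [[x' [_ HD]] _].
  destruct (classic (exists z, 0 < d x z)) as [[z Hz]|Hno].
  - right. split; [|split].
    + intros [r [Hr Hiso]].
      destruct (geodesic_points_nearby metric geodesic_space x z Hz r Hr) as [y Hy].
      exact (Hiso y Hy).
    + intros eps Heps.
      destruct (slope_upper_estimate t x Ht eps Heps) as [δ [Hδ Hup]].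
      exists δ. split; [exact Hδ|]. intros y Hy.
      apply Rdiv_lt_of_lt_mul; [lra|]. exact (Hup y Hy).
    + intros eps δ Heps Hδ.
      destruct (Rle_lt_dec (Dplus d f x t) 0) as [HD0|HDpos].
      * destruct (geodesic_points_nearby metric geodesic_space x z Hz δ Hδ) as [y Hy].
        exists y. split; [exact Hy|].
        assert (0 <= Rabs (Q d f t y - Q d f t x) / d y x).
        { unfold Rdiv. apply Rmult_le_pos; [apply Rabs_pos|].
          left. apply Rinv_0_lt_compat. lra. }
        assert (Dplus d f x t / t <= 0).
        { pose proof (Rinv_0_lt_compat t Ht). unfold Rdiv. nra. }
        lra.
      * destruct (slope_lower_estimate t x Ht HDpos eps δ Heps Hδ) as [y [Hy Hlow]].
        exists y. split; [exact Hy|]. apply Rlt_div_of_mul_lt; [lra|exact Hlow].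
  - (* Every point coincides with x: x is isolated and D^+ = 0. *)
    left. split.
    + exists 1. split; [lra|]. intros y [Hy _]. apply Hno. exists y.
      rewrite (dist_sym metric). exact Hy.
    + assert (Hx' : d x x' = 0).
      { destruct (dist_nonneg metric x x') as [H|H]; [|auto].
        exfalso. apply Hno. exists x'. exact H. }
      rewrite HD, Hx'. unfold Rdiv. ring.
Qed.

Lemma Q_secant_bounds x :
  secant_bounded (fun s => Q d f s x) (fun s => Dplus d f x s ^ 2).
Proof.
  intros a b Hab. cbv beta.
  assert (Ha : 0 < a) by lra. assert (Hb : 0 < b) by lra.
  pose proof (inv_double_sub_pos a b Hab) as Hc.
  destruct (Dplus_spec a x Ha) as [[ya [Hya ->]] _].
  destruct (minimizer_exists b x Hb) as [yb Hyb].
  pose proof (proj2 (Dplus_spec b x Hb) yb Hyb) as HDb.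
  pose proof (dist_nonneg metric x yb).
  pose proof (Q_at_minimizer a x ya Ha Hya). pose proof (Q_at_minimizer b x yb Hb Hyb).
  pose proof (Q_le_HLF b x ya Hb). pose proof (Q_le_HLF a x yb Ha).
  unfold HLF, Rdiv in *.
  set (ia := / (2 * a)) in *. set (ib := / (2 * b)) in *.
  assert (0 <= (Dplus d f x b ^ 2 - d x yb ^ 2) * (ia - ib))
    by (apply Rmult_le_pos; nra).
  split; nra.
Qed.

End HopfLax.

Theorem mainTheorem2 (X : Type) (d : X -> X -> R) (f : X -> R) :
  is_metric d -> compact_space d -> geodesic d -> lipschitz d f ->
  (forall x t, 0 < t -> is_slope d (Q d f t) x (Dplus d f x t / t)) /\
  (forall x, exists N : nat -> R,
     forall t, 0 < t -> (forall n, N n <> t) ->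
       derivable_pt_lim (fun s => Q d f s x) t
         (- (1/2) * (slope d (Q d f t) x) ^ 2)).
Proof.
  intros Hmetric Hcompact Hgeod [L HL].
  destruct (compact_bounded Hmetric Hcompact) as [B Hdiam].
  pose proof (Rabs_pos L) as HL0.
  assert (Hf : forall y z, Rabs (f y - f z) <= Rabs L * d y z).
  { intros y z. eapply Rle_trans; [apply HL|].
    apply Rmult_le_compat_r; [apply (dist_nonneg Hmetric)|apply Rle_abs]. }
  assert (Hslope : forall x t, 0 < t -> is_slope d (Q d f t) x (Dplus d f x t / t))
    by (intros x t; exact (slope_of_Q Hmetric Hcompact HL0 Hf Hdiam Hgeod t x)).
  split; [exact Hslope|]. intros x.
  (* Q_t f(x) is differentiable wherever the nondecreasing t |-> D^+(x,t)^2 is continuous. *)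
  pose proof (Q_secant_bounds Hmetric Hcompact HL0 Hf Hdiam x) as Hsec.
  destruct (nondecreasing_continuous_off_countable _ (secant_bounded_monotone _ _ Hsec))
    as [N HN].
  exists N. intros t Ht Hnot.
  rewrite (slope_value d _ x _ (Hslope x t Ht)).
  replace (- (1 / 2) * (Dplus d f x t / t) ^ 2) with (- Dplus d f x t ^ 2 / (2 * t ^ 2))
    by (field; lra).
  exact (derivative_from_secant_bounds _ _ t Ht Hsec (HN t Ht Hnot)).
Qed.
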